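(* Let $F:\mathcal A\to\mathcal B$ be an additive functor between additive categories. Then $F$ satisfies both conditions (WSM) and (I) if and only if $F$ satisfies condition (SM).
   Context: (WSM): for each morphism $u:X\to Y$ in $\mathcal A$ with $F(u)$ a splitting monomorphism in $\mathcal B$, there exists a morphism $u':Y\to X'$ in $\mathcal A$ (some object $X'$) with $F(u'u)$ an isomorphism. (I): for each morphism $u:X\to Y$ in $\mathcal A$ with $F(u)$ an isomorphism, there exists $u':Y\to X$ with $F(u)^{-1}=F(u')$. (SM): for each morphism $u:X\to Y$ in $\mathcal A$ with $F(u)$ a splitting monomorphism, there exists $u':Y\to X$ with $F(u'u)=1_{F(X)}$. *)

Set Implicit Arguments.
Unset Strict Implicit.

(* A preadditive category: a category whose hom-sets are abelian groups
   and whose composition is bilinear.  [comp g f] is  g o f. *)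
Record Preadditive := {
  Ob :> Type;
  Hom : Ob -> Ob -> Type;
  comp : forall {X Y Z : Ob}, Hom Y Z -> Hom X Y -> Hom X Z;
  idm : forall X : Ob, Hom X X;
  comp_assoc : forall X Y Z W (f : Hom X Y) (g : Hom Y Z) (h : Hom Z W),
      comp h (comp g f) = comp (comp h g) f;
  comp_id_l : forall X Y (f : Hom X Y), comp (idm Y) f = f;
  comp_id_r : forall X Y (f : Hom X Y), comp f (idm X) = f;
  zero : forall X Y : Ob, Hom X Y;
  add : forall {X Y : Ob}, Hom X Y -> Hom X Y -> Hom X Y;
  opp : forall {X Y : Ob}, Hom X Y -> Hom X Y;
  add_assoc : forall X Y (f g h : Hom X Y), add f (add g h) = add (add f g) h;
  add_comm : forall X Y (f g : Hom X Y), add f g = add g f;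
  add_zero_l : forall X Y (f : Hom X Y), add (zero X Y) f = f;
  add_opp_l : forall X Y (f : Hom X Y), add (opp f) f = zero X Y;
  comp_add_l : forall X Y Z (f : Hom X Y) (g g' : Hom Y Z),
      comp (add g g') f = add (comp g f) (comp g' f);
  comp_add_r : forall X Y Z (f f' : Hom X Y) (g : Hom Y Z),
      comp g (add f f') = add (comp g f) (comp g f')
}.

Arguments comp {_ _ _ _} _ _.
Arguments idm {_} _.
Arguments zero {_} _ _.
Arguments add {_ _ _} _ _.
Arguments opp {_ _ _} _.

Definition has_zero_object (C : Preadditive) : Prop :=
  exists Z : C, idm Z = zero Z Z.

Definition has_biproducts (C : Preadditive) : Prop :=
  forall X Y : C, exists (P : C) (p1 : Hom P X) (p2 : Hom P Y)
                         (i1 : Hom X P) (i2 : Hom Y P),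
    comp p1 i1 = idm X /\ comp p2 i2 = idm Y /\
    comp p1 i2 = zero Y X /\ comp p2 i1 = zero X Y /\
    add (comp i1 p1) (comp i2 p2) = idm P.

Definition is_additive (C : Preadditive) : Prop :=
  has_zero_object C /\ has_biproducts C.

Record Functor (A B : Preadditive) := {
  Fob :> A -> B;
  Fmor : forall {X Y : A}, Hom X Y -> Hom (Fob X) (Fob Y);
  F_id : forall X : A, Fmor (idm X) = idm (Fob X);
  F_comp : forall X Y Z (f : Hom X Y) (g : Hom Y Z),
      Fmor (comp g f) = comp (Fmor g) (Fmor f)
}.

Arguments Fmor {_ _} _ {_ _} _.

Definition is_additive_functor (A B : Preadditive) (F : Functor A B) : Prop :=
  forall (X Y : A) (f g : Hom X Y), Fmor F (add f g) = add (Fmor F f) (Fmor F g).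

Definition is_iso (C : Preadditive) (X Y : C) (f : Hom X Y) : Prop :=
  exists g : Hom Y X, comp g f = idm X /\ comp f g = idm Y.

Definition is_split_mono (C : Preadditive) (X Y : C) (f : Hom X Y) : Prop :=
  exists r : Hom Y X, comp r f = idm X.

Definition cond_WSM (A B : Preadditive) (F : Functor A B) : Prop :=
  forall (X Y : A) (u : Hom X Y), is_split_mono (Fmor F u) ->
    exists (X' : A) (u' : Hom Y X'), is_iso (Fmor F (comp u' u)).

Definition cond_I (A B : Preadditive) (F : Functor A B) : Prop :=
  forall (X Y : A) (u : Hom X Y), is_iso (Fmor F u) ->
    exists u' : Hom Y X,
      comp (Fmor F u') (Fmor F u) = idm (F X) /\
      comp (Fmor F u) (Fmor F u') = idm (F Y).

Definition cond_SM (A B : Preadditive) (F : Functor A B) : Prop :=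
  forall (X Y : A) (u : Hom X Y), is_split_mono (Fmor F u) ->
    exists u' : Hom Y X, Fmor F (comp u' u) = idm (F X).


(* Conversely a lift [u']
   of a retraction of an isomorphism [F u] is a left inverse of [F u], hence equal to
   its two-sided inverse. *)

Lemma is_iso_idm (C : Preadditive) (X : C) : is_iso (idm X).
Proof. exists (idm X); split; apply comp_id_l. Qed.

Lemma left_inverse_eq_right_inverse {C : Preadditive} {X Y : C}
  {f : Hom X Y} {r g : Hom Y X} :
  comp r f = idm X -> comp f g = idm Y -> r = g.
Proof.
  intros Hr Hg.
  rewrite <- (comp_id_r r), <- Hg, comp_assoc, Hr, comp_id_l.
  reflexivity.
Qed.

Section SplitMonoConditions.

Context {A B : Preadditive} {F : Functor A B}.

Lemma cond_SM_of_WSM_I : cond_WSM F -> cond_I F -> cond_SM F.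
Proof.
  intros HW HI X Y u Hu.
  destruct (HW X Y u Hu) as [X' [u' Hiso]].
  destruct (HI X X' (comp u' u) Hiso) as [v [Hv _]].
  exists (comp v u').
  rewrite <- comp_assoc, F_comp.
  exact Hv.
Qed.

Lemma cond_WSM_of_SM : cond_SM F -> cond_WSM F.
Proof.
  intros HS X Y u Hu.
  destruct (HS X Y u Hu) as [u' Hu'].
  exists X, u'.
  rewrite Hu'.
  apply is_iso_idm.
Qed.

Lemma cond_I_of_SM : cond_SM F -> cond_I F.
Proof.
  intros HS X Y u [g [Hgu Hug]].
  destruct (HS X Y u (ex_intro _ g Hgu)) as [u' Hu'].
  rewrite F_comp in Hu'.
  exists u'.
  split; [exact Hu' |].
  rewrite (left_inverse_eq_right_inverse Hu' Hug).
  exact Hug.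
Qed.

End SplitMonoConditions.

Theorem proposition3p1 (A B : Preadditive) (HA : is_additive A) (HB : is_additive B)
  (F : Functor A B) (HF : is_additive_functor F) :
  (cond_WSM F /\ cond_I F) <-> cond_SM F.
Proof.
  split.
  - intros [HW HI]. exact (cond_SM_of_WSM_I HW HI).
  - intros HS. exact (conj (cond_WSM_of_SM HS) (cond_I_of_SM HS)).
Qed.
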